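(* Let $\mathcal F$ be a Hilbert space with metric $d$ induced by its norm, $\mathcal D=(\phi_i)_{i\in\mathbb N}\subset\mathcal F$, and $\pi:\mathbb N\to\mathbb N$ of at most polynomial growth. For every finite $I\subset\mathbb N$ let $(\tilde\phi^I_i)_{i\in I}$ be an orthonormalization of $(\phi_i)_{i\in I}$ (e.g. Gram–Schmidt: pairwise orthogonal vectors, each of norm $0$ or $1$, spanning the same space as $(\phi_i)_{i\in I}$). For $M\in\mathbb N$ and $c>0$ set $$\Sigma^\pi_M=\Big\{\sum_{i\in I}c_i\phi_i:I\subset\{1,\dots,\pi(M)\},|I|\le M,(c_i)\in\mathbb R^I\Big\},\quad \tilde\Sigma^{\pi,c}_M=\Big\{\sum_{i\in I}\tilde c_i\tilde\phi^I_i:I\subset\{1,\dots,\pi(M)\},|I|\le M,(\tilde c_i)\in[-c,c]^I\Big\}.$$ Then for every $c>0$ the sequence $\tilde\Sigma^{\pi,c}=(\tilde\Sigma^{\pi,c}_M)_M$ is $\infty$-encodable in $(\mathcal F,d)$, and for every bounded non-empty $\mathcal C\subset\mathcal F$, $$\gamma^*(\mathcal C|\Sigma^\pi)=\max_{c>0}\gamma^*(\mathcal C|\tilde\Sigma^{\pi,c})$$ (in particular the maximum is attained).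
   Context: Approximation speed: $\gamma^*(\mathcal C|\Sigma)=\sup\{\gamma\in\mathbb R:\sup_{f\in\mathcal C}\inf_{\Phi\in\Sigma_M}d(f,\Phi)=O(M^{-\gamma})\text{ as }M\to\infty\}\in[-\infty,\infty]$ ($\sup\emptyset=-\infty$). A finite $X\subset A$ is an $\varepsilon$-covering of $A$ if every point of $A$ is within distance $\varepsilon$ of some point of $X$. For $\gamma,h>0$, a $(\gamma,h)$-encoding of $\Sigma=(\Sigma_M)_M$ is a sequence $(\Sigma(\gamma,h)_M)_M$ such that for some $c_1,c_2>0$ and all $M$, $\Sigma(\gamma,h)_M$ is a $c_1M^{-\gamma}$-covering of $\Sigma_M$ with $\log_2|\Sigma(\gamma,h)_M|\le c_2M^{1+h}$. $\Sigma$ is $\gamma$-encodable if it admits a $(\gamma,h)$-encoding for every $h>0$, and $\infty$-encodable if it is $\gamma$-encodable for every $\gamma>0$. *)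

From HB Require Import structures.
From mathcomp Require Import all_boot all_order all_algebra.
From mathcomp Require Import finmap.
From mathcomp Require Import all_classical all_reals all_analysis.
Set Implicit Arguments. Unset Strict Implicit. Unset Printing Implicit Defensive.
Import Order.TTheory GRing.Theory Num.Theory.
Import numFieldNormedType.Exports.
Local Open Scope classical_set_scope.
Local Open Scope ring_scope.


Section Defs.
Context {R : realType}.

Definition is_inner_product (V : normedModType R) (ip : V -> V -> R) : Prop :=
  [/\ (forall x y, ip x y = ip y x),
      (forall (a : R) x y z, ip (a *: x + y) z = a * ip x z + ip y z) &
      (forall x, ip x x = `|x| ^+ 2)].

Definition hilbert_space (V : completeNormedModType R) (ip : V -> V -> R) :=
  is_inner_product ip.

Definition poly_growth (pi : nat -> nat) : Prop :=
  exists (k C : nat), forall M, (pi M <= C * M.+1 ^ k)%N.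

Definition fspan (V : normedModType R) (I : {fset nat}) (f : nat -> V) : set V :=
  [set v | exists c : nat -> R, v = \sum_(i <- I) c i *: f i].

Definition orthonormalization (V : normedModType R) (ip : V -> V -> R)
  (phi : nat -> V) (phit : {fset nat} -> nat -> V) : Prop :=
  forall I : {fset nat},
    [/\ (forall i j, i \in I -> j \in I -> i != j -> ip (phit I i) (phit I j) = 0),
        (forall i, i \in I -> `|phit I i| = 0 \/ `|phit I i| = 1) &
        fspan I (phit I) = fspan I phi].

Definition Sigma (V : normedModType R) (phi : nat -> V) (pi : nat -> nat)
  (M : nat) : set V :=
  [set v | exists (I : {fset nat}) (c : nat -> R),
     [/\ (forall i, i \in I -> (1 <= i <= pi M)%N), (#|` I|%fset <= M)%N &
         v = \sum_(i <- I) c i *: phi i] ].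

Definition Sigma_tilde (V : normedModType R) (phit : {fset nat} -> nat -> V)
  (pi : nat -> nat) (c : R) (M : nat) : set V :=
  [set v | exists (I : {fset nat}) (ct : nat -> R),
     [/\ (forall i, i \in I -> (1 <= i <= pi M)%N), (#|` I|%fset <= M)%N,
         (forall i, i \in I -> - c <= ct i <= c) &
         v = \sum_(i <- I) ct i *: phit I i] ].

Definition covering (V : normedModType R) (eps : R) (X : {fset V}) (A : set V) : Prop :=
  (forall x, x \in X -> A x) /\
  (forall a, A a -> exists2 x, x \in X & `|a - x| <= eps).

Definition log2 (x : R) : R := ln x / ln 2.

Definition is_encoding (V : normedModType R) (Sig : nat -> set V) (g h : R)
  (X : nat -> {fset V}) : Prop :=
  exists c1 c2 : R, [/\ 0 < c1, 0 < c2 &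
    forall M : nat, (1 <= M)%N ->
      covering (c1 * (M%:R) `^ (- g)) (X M) (Sig M) /\
      log2 ((#|` X M|)%fset%:R) <= c2 * (M%:R) `^ (1 + h)].

Definition gamma_encodable (V : normedModType R) (Sig : nat -> set V) (g : R) : Prop :=
  forall h : R, 0 < h -> exists X : nat -> {fset V}, is_encoding Sig g h X.

Definition infty_encodable (V : normedModType R) (Sig : nat -> set V) : Prop :=
  forall g : R, 0 < g -> gamma_encodable Sig g.

Definition approx_err (V : normedModType R) (C : set V) (Sig : nat -> set V)
  (M : nat) : \bar R :=
  ereal_sup [set ereal_inf [set (`|f - p|)%:E | p in Sig M] | f in C].

(* gamma^*(C | Sig) in [-oo, +oo]; ereal_sup set0 = -oo *)
Definition approx_speed (V : normedModType R) (C : set V) (Sig : nat -> set V) : \bar R :=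
  ereal_sup [set g%:E | g in
    [set g : R | exists (K : R) (N : nat), forall M : nat, (N <= M)%N -> (1 <= M)%N ->
        (approx_err C Sig M <= (K * (M%:R) `^ (- g))%:E)%E] ].

Definition bounded_subset (V : normedModType R) (C : set V) : Prop :=
  exists r : R, forall x, C x -> `|x| <= r.

End Defs.

From HB Require Import structures.
From mathcomp Require Import all_boot all_order all_algebra.
From mathcomp Require Import finmap.
From mathcomp Require Import all_classical all_reals all_analysis.
From mathcomp Require Import lra zify ring.
Import Order.TTheory GRing.Theory Num.Theory.
Import numFieldNormedType.Exports.
Local Open Scope classical_set_scope.
Local Open Scope ring_scope.
Set Implicit Arguments. Unset Strict Implicit.

(* An element v of Sigma^pi_M with support I lies in the span of the
   orthonormalization of (phi_i)_{i in I}, so v = sum_i <v, phit_i> phit_i with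
   |<v, phit_i>| <= |v|.  For |f| <= r, an approximant v of f is either beaten by
   0 or satisfies |v| <= 2r; hence tilde-Sigma^{pi,2r+1} approximates C as well
   as Sigma^pi, and never better since it is a subset of it.
   For encodability, round each coefficient in [-c, c] to a grid of step c/N
   with N = M^(e+1): an element is then described by M slots, each holding an
   index at most pi(M) and one of 2N+1 levels.  This gives 2^O(M log M) codes
   and an error of at most M c/N = c M^-e. *)

Section InnerProduct.
Context {R : realType} {V : normedModType R} (ip : V -> V -> R).
Hypothesis ipP : is_inner_product ip.

Lemma ipC x y : ip x y = ip y x.
Proof. by case: ipP. Qed.

Lemma ipDl x y z : ip (x + y) z = ip x z + ip y z.
Proof. by case: ipP => _ ipL _; have := ipL 1 x y z; rewrite scale1r mul1r. Qed.

Lemma ip0l z : ip 0 z = 0.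
Proof. by have := ipDl 0 0 z; rewrite addr0; lra. Qed.

Lemma ip0r z : ip z 0 = 0.
Proof. by rewrite ipC ip0l. Qed.

Lemma ipZl a x z : ip (a *: x) z = a * ip x z.
Proof. by case: ipP => _ ipL _; have := ipL a x 0 z; rewrite addr0 ip0l addr0. Qed.

Lemma ipxx x : ip x x = `|x| ^+ 2.
Proof. by case: ipP. Qed.

Lemma ip_suml (I : Type) (s : seq I) (F : I -> V) z :
  ip (\sum_(i <- s) F i) z = \sum_(i <- s) ip (F i) z.
Proof.
by elim: s => [|a s IH]; rewrite ?big_nil ?ip0l // !big_cons ipDl IH.
Qed.

(* Expand 0 <= |v - t e|^2 with t = <v, e>. *)
Lemma norm_ip_unit_le v e : `|e| = 1 -> `|ip v e| <= `|v|.
Proof.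
move=> e1; set t := ip v e.
have sq_ge0 : 0 <= ip ((- t) *: e + v) ((- t) *: e + v) by rewrite ipxx sqr_ge0.
have ip_e : ip e ((- t) *: e + v) = 0.
  by rewrite ipC ipDl !ipZl ipxx e1 expr1n mulr1 addNr.
have ip_v : ip v ((- t) *: e + v) = - t * t + `|v| ^+ 2.
  by rewrite ipC ipDl ipZl ipxx (ipC e v).
rewrite ipDl ipZl ip_e ip_v in sq_ge0.
have v_ge0 := normr_ge0 v; rewrite ler_norml; apply/andP; split; nra.
Qed.

Lemma orthogonal_expansion (K : choiceType) (I : {fset K}) (e : K -> V) (b : K -> R) :
  (forall i j, i \in I -> j \in I -> i != j -> ip (e i) (e j) = 0) ->
  (forall i, i \in I -> `|e i| = 0 \/ `|e i| = 1) ->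
  \sum_(i <- I) b i *: e i =
  \sum_(i <- I) ip (\sum_(k <- I) b k *: e k) (e i) *: e i.
Proof.
move=> e_orth e_norm; apply: eq_big_seq => j jI.
rewrite ip_suml (bigD1_seq j) //= ?fset_uniq // big1_seq ?addr0; last first.
  by move=> i /andP[ij iI]; rewrite ipZl e_orth // mulr0.
rewrite ipZl ipxx; case: (e_norm j jI) => [/normr0_eq0 ->|->].
  by rewrite !scaler0.
by rewrite expr1n mulr1.
Qed.

End InnerProduct.

Section Orthonormalization.
Context {R : realType} {V : normedModType R} (ip : V -> V -> R).
Variables (phi : nat -> V) (phit : {fset nat} -> nat -> V) (pi : nat -> nat).
Hypothesis orthP : orthonormalization ip phi phit.

Lemma orthonormalization_norm_le1 I i : i \in I -> `|phit I i| <= 1.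
Proof. by move=> iI; case: (orthP I) => _ /(_ i iI)[] -> _; rewrite ?ler01. Qed.

Lemma Sigma_tilde_sub c M : Sigma_tilde phit pi c M `<=` Sigma phi pi M.
Proof.
move=> _ [I [ct [I_itv cardI _ ->]]].
have : fspan I (phit I) (\sum_(i <- I) ct i *: phit I i) by exists ct.
by case: (orthP I) => _ _ -> [b ->]; exists I, b.
Qed.

Lemma Sigma_tilde0 c M : Sigma_tilde phit pi c M 0.
Proof.
by exists fset0, (fun=> 0); split=> [i|||]; rewrite ?in_fset0 ?cardfs0 ?big_seq_fset0.
Qed.

Hypothesis ipP : is_inner_product ip.

(* The coefficients of v in the orthonormalization are the <v, phit I i>. *)
Lemma Sigma_tilde_of_Sigma c M v :
  Sigma phi pi M v -> `|v| <= c -> Sigma_tilde phit pi c M v.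
Proof.
move=> [I [b [I_le cardI v_def]]] v_le.
have : fspan I phi v by exists b.
case: (orthP I) => orth norm01 <- [b' v_def'].
exists I, (fun i => ip v (phit I i)); split => // [i iI|].
  rewrite -ler_norml; case: (norm01 i iI) => [/normr0_eq0 ->|/(norm_ip_unit_le ipP v)].
    by rewrite ip0r // normr0 (le_trans (normr_ge0 v) v_le).
  by move/le_trans; apply.
by rewrite {1}v_def' (orthogonal_expansion ipP b') // -v_def'.
Qed.

(* Either 0 is at least as close to f as v, or |v| <= 2|f|. *)
Lemma Sigma_tilde_nearer r f M v : `|f| <= r -> Sigma phi pi M v ->
  exists2 w, Sigma_tilde phit pi (2 * r + 1) M w & `|f - w| <= `|f - v|.
Proof.
move=> f_le Sv; have [f_near|v_near] := leP `|f| `|f - v|.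
  by exists 0; rewrite ?subr0 //; apply: Sigma_tilde0.
exists v => //; apply: Sigma_tilde_of_Sigma => //.
by have := ler_normB f (f - v); rewrite opprB addrC subrK; lra.
Qed.

End Orthonormalization.

Section ApproximationSpeed.
Context {R : realType} {V : normedModType R} (C : set V).

Lemma approx_err_le (S1 S2 : nat -> set V) M :
  (forall f p, C f -> S2 M p -> exists2 q, S1 M q & `|f - q| <= `|f - p|) ->
  (approx_err C S1 M <= approx_err C S2 M)%E.
Proof.
move=> nearer; apply: ub_ereal_sup => _ [f Cf <-].
apply: (@le_trans _ _ (ereal_inf [set (`|f - p|)%:E | p in S2 M])).
  apply: le_ereal_inf_tmp => _ [p Sp <-].
  have [q Sq fq_le] := nearer f p Cf Sp.
  by apply: ge_ereal_inf; exists (`|f - q|)%:E; [exists q | rewrite lee_fin].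
by apply: le_ereal_sup_tmp; exists (ereal_inf [set (`|f - p|)%:E | p in S2 M]) => //; exists f.
Qed.

Lemma approx_speed_le (S1 S2 : nat -> set V) :
  (forall M f p, C f -> S2 M p -> exists2 q, S1 M q & `|f - q| <= `|f - p|) ->
  (approx_speed C S2 <= approx_speed C S1)%E.
Proof.
move=> nearer; apply: le_ereal_sup => _ [g [K [N err_le]] <-]; exists g => //.
exists K, N => M NM M_gt0; exact: le_trans (approx_err_le (nearer M)) (err_le M NM M_gt0).
Qed.

Lemma approx_speed_subset (S1 S2 : nat -> set V) :
  (forall M, S1 M `<=` S2 M) -> (approx_speed C S1 <= approx_speed C S2)%E.
Proof. by move=> sub; apply: approx_speed_le => M f p _ /sub S2p; exists p. Qed.

End ApproximationSpeed.

Lemma approx_speed_Sigma_tilde_eq (R : realType) (V : normedModType R)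
    (ip : V -> V -> R) phi phit pi (C : set V) (r : R) :
  is_inner_product ip -> orthonormalization ip phi phit ->
  (forall f, C f -> `|f| <= r) ->
  approx_speed C (Sigma phi pi) = approx_speed C (Sigma_tilde phit pi (2 * r + 1)).
Proof.
move=> ipP orthP C_le; apply: le_anti; apply/andP; split.
  by apply: approx_speed_le => M f p /C_le; apply: Sigma_tilde_nearer.
exact/approx_speed_subset/Sigma_tilde_sub.
Qed.

Section Grid.
Context {R : realType} (c : R) (N : nat).
Hypotheses (c_gt0 : 0 < c) (N_gt0 : (0 < N)%N).

Definition grid_point (k : nat) : R := - c + k%:R * (c / N%:R).

Definition grid_index (x : R) : nat := Num.trunc ((x + c) * N%:R / c).

Let step_gt0 : 0 < c / N%:R.
Proof. by rewrite divr_gt0 // ltr0n. Qed.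

Let N_step : N%:R * (c / N%:R) = c.
Proof. by field; rewrite pnatr_eq0 -lt0n. Qed.

Lemma grid_point_itv k : (k <= N.*2)%N -> - c <= grid_point k <= c.
Proof.
move=> k_le; have k2N : (k%:R : R) <= 2 * N%:R by rewrite -natrM ler_nat mul2n.
have k_ge0 := ler0n R k; have Nu := N_step; have u_gt0 := step_gt0.
by rewrite /grid_point; apply/andP; split; nra.
Qed.

Lemma grid_index_spec x : - c <= x <= c ->
  (grid_index x <= N.*2)%N /\ `|x - grid_point (grid_index x)| <= c / N%:R.
Proof.
move=> /andP[x_ge x_le]; rewrite /grid_index /grid_point.
set t := (x + c) * N%:R / c.
have t_step : t * (c / N%:R) = x + c.
  by rewrite /t; field; rewrite pnatr_eq0 -lt0n N_gt0 gt_eqF.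
have t_ge0 : 0 <= t by rewrite /t divr_ge0 ?mulr_ge0 ?ler0n //; lra.
have /andP[k_le k_gt] := truncn_itv t_ge0; set k := Num.trunc t in k_le k_gt *.
have Nu := N_step; have u_gt0 := step_gt0.
split; first by rewrite truncn_le_nat -addn1 natrD -muln2 natrM; nra.
by rewrite ler_norml; apply/andP; split; nra.
Qed.

End Grid.

(* A code has M slots, each holding an index at most P (0 marks an empty slot,
   as the indices of Sigma start at 1) and a level at most L. *)
Local Notation code P L M := {ffun 'I_M -> 'I_P.+1 * 'I_L.+1} (only parsing).

Section Codes.
Variables (P L M : nat).

Definition code_support (p : code P L M) : {fset nat} :=
  seq_fset tt [seq i <- [seq val (p s).1 | s <- enum 'I_M] | i != 0%N].

Definition code_level (p : code P L M) (i : nat) : nat :=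
  (\max_(s < M | val (p s).1 == i) val (p s).2)%N.

Lemma code_support_itv p i : i \in code_support p -> (1 <= i <= P)%N.
Proof.
rewrite seq_fsetE mem_filter lt0n => /andP[i_neq0 /mapP[s _ i_def]].
by rewrite i_neq0 i_def -ltnS ltn_ord.
Qed.

Lemma card_code_support p : (#|` code_support p| <= M)%N.
Proof.
rewrite size_seq_fset (leq_trans (size_undup _)) // size_filter.
by rewrite (leq_trans (count_size _ _)) // size_map size_enum_ord.
Qed.

Lemma code_level_le p i : (code_level p i <= L)%N.
Proof. by apply/bigmax_leqP => s _; rewrite -ltnS ltn_ord. Qed.

(* The slot of i is its position in I. *)
Lemma code_exists (I : {fset nat}) (k : nat -> nat) :
  (forall i, i \in I -> (1 <= i <= P)%N) -> (#|` I| <= M)%N ->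
  (forall i, i \in I -> (k i <= L)%N) ->
  exists p : code P L M,
    code_support p = I /\ forall i, i \in I -> code_level p i = k i.
Proof.
move=> I_itv cardI k_le.
have nth_le s : (nth 0%N I s <= P)%N.
  have [s_lt|s_ge] := ltnP s (size I); last by rewrite nth_default.
  by have /andP[_ ->] := I_itv _ (mem_nth 0%N s_lt).
pose p : code P L M := [ffun s : 'I_M => (inord (nth 0%N I s), inord (k (nth 0%N I s)))].
have p1 s : val (p s).1 = nth 0%N I s by rewrite ffunE /= inordK // ltnS.
have slot i : i \in I -> (index i I < M)%N.
  by move=> iI; apply: leq_trans cardI; rewrite index_mem.
have p_slot i (iI : i \in I) : val (p (Ordinal (slot i iI))).1 == i.
  by rewrite p1 /= nth_index.
exists p; split=> [|i iI].
  apply/fsetP => i; rewrite seq_fsetE mem_filter; apply/idP/idP.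
    case/andP => i_neq0 /mapP[s _ i_def]; move: i_neq0; rewrite i_def p1.
    have [s_lt _|s_ge] := ltnP s (size I); first exact: mem_nth.
    by rewrite nth_default ?eqxx.
  move=> iI; have /andP[i_gt0 _] := I_itv i iI; rewrite -lt0n i_gt0.
  by apply/mapP; exists (Ordinal (slot i iI)); rewrite ?mem_enum // (eqP (p_slot i iI)).
apply/eqP; rewrite eqn_leq; apply/andP; split.
  apply/bigmax_leqP => s /eqP si; rewrite p1 in si.
  by rewrite ffunE /= si inordK // ltnS k_le.
apply: leq_trans (leq_bigmax_cond _ (p_slot i iI)).
by rewrite ffunE /= nth_index // inordK // ltnS k_le.
Qed.

End Codes.

Section Codebook.
Context {R : realType} {V : normedModType R}.
Variables (phit : {fset nat} -> nat -> V) (pi : nat -> nat) (c : R).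
Hypothesis c_gt0 : 0 < c.

Definition decode (P N M : nat) (p : code P N.*2 M) : V :=
  \sum_(i <- code_support p) grid_point c N (code_level p i) *: phit (code_support p) i.

Definition codebook (P N M : nat) : {fset V} :=
  seq_fset tt [seq decode p | p <- enum {: code P N.*2 M}].

Lemma card_codebook P N M : (#|` codebook P N M| <= (P.+1 * (N.*2).+1) ^ M)%N.
Proof.
rewrite size_seq_fset (leq_trans (size_undup _)) //.
by rewrite size_map -cardE card_ffun card_prod !card_ord.
Qed.

Variable N : nat.
Hypothesis N_gt0 : (0 < N)%N.

Lemma decode_Sigma_tilde M (p : code (pi M) N.*2 M) :
  Sigma_tilde phit pi c M (decode p).
Proof.
exists (code_support p), (fun i => grid_point c N (code_level p i)).
split=> [i /code_support_itv //||i _|//]; first exact: card_code_support.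
exact/grid_point_itv/code_level_le.
Qed.

Lemma codebook_covering M :
  (forall I i, i \in I -> `|phit I i| <= 1) ->
  covering (M%:R * (c / N%:R)) (codebook (pi M) N M) (Sigma_tilde phit pi c M).
Proof.
move=> phit_le1; split.
  by move=> x; rewrite seq_fsetE => /mapP[p _ ->]; apply: decode_Sigma_tilde.
move=> a [I [ct [I_itv cardI ct_itv ->]]].
have [p [suppI levelI]] := code_exists I_itv cardI
  (fun i iI => (grid_index_spec c_gt0 N_gt0 (ct_itv i iI)).1).
exists (decode p); first by rewrite seq_fsetE; apply/mapP; exists p; rewrite ?mem_enum.
rewrite /decode suppI -sumrB (le_trans (ler_norm_sum _ _ _)) //.
apply: (@le_trans _ _ (\sum_(i <- I) c / N%:R)).
  rewrite !big_seq; apply: ler_sum => i iI.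
  rewrite -scalerBl normrZ levelI // -[leRHS]mulr1.
  rewrite ler_pM //; [exact: (grid_index_spec c_gt0 N_gt0 (ct_itv i iI)).2 | exact: phit_le1].
rewrite big_const_seq count_predT iter_addr addr0.
by rewrite -(mulr_natl (c / N%:R)) ler_pM2r ?ler_nat ?divr_gt0 ?ltr0n.
Qed.

End Codebook.

Lemma code_count_le (Cp k e M P : nat) : (0 < e)%N -> (0 < M)%N ->
  (P <= Cp * M.+1 ^ k)%N ->
  (P.+1 * ((M ^ e).*2).+1 <= 3 * Cp.+1 * 2 ^ (k + e) * M ^ (k + e))%N.
Proof.
move=> e_gt0 M_gt0 P_le.
have P1_le : (P.+1 <= Cp.+1 * M.+1 ^ k)%N.
  have Mk_gt0 : (0 < M.+1 ^ k)%N by rewrite expn_gt0.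
  nia.
have Me_le : (M ^ e <= M.+1 ^ e)%N by rewrite leq_exp2r.
have Ne_le : (((M ^ e).*2).+1 <= 3 * M.+1 ^ e)%N.
  by rewrite -muln2; lia.
have M1_le : (M.+1 ^ (k + e) <= 2 ^ (k + e) * M ^ (k + e))%N.
  by rewrite -expnMn leq_exp2r ?addn_gt0 ?e_gt0 ?orbT //; lia.
apply: leq_trans (leq_mul P1_le Ne_le) _.
have -> : (Cp.+1 * M.+1 ^ k * (3 * M.+1 ^ e) = 3 * Cp.+1 * M.+1 ^ (k + e))%N.
  by rewrite expnD; lia.
by rewrite -(mulnA (3 * Cp.+1)) leq_pmul2l.
Qed.

Lemma ln_le_powR (R : realType) (h x : R) : 0 < h -> 0 < x -> ln x <= x `^ h / h.
Proof.
move=> h_gt0 x_gt0; have xh_gt0 : 0 < x `^ h by apply: powR_gt0.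
have := @le_ln1Dx R (x `^ h - 1); rewrite addrCA subrr addr0 ln_powR => ln_le.
by rewrite ler_pdivlMr // mulrC (le_trans (ln_le _)) //; lra.
Qed.

Lemma ler_log2_nat (R : realType) (m n : nat) : (m <= n)%N -> log2 (m%:R : R) <= log2 n%:R.
Proof.
have ln2_gt0 : (0 : R) < ln 2 by apply: ln_gt0; lra.
case: m => [|m] mn; rewrite /log2 ler_pM2r ?invr_gt0 //.
  by case: n mn => [|n] _; rewrite ln0 // ?lexx // ln_ge0 // ler1n.
by rewrite ler_ln ?posrE ?ltr0n ?ler_nat // (leq_trans _ mn).
Qed.

(* ln M <= M^h / h absorbs the polynomial factor M^E into M^h. *)
Lemma log2_code_count_le (R : realType) (h : R) (D E M : nat) :
  0 < h -> (0 < D)%N -> (0 < M)%N ->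
  log2 ((D * M ^ E) ^ M)%:R <= (ln (D%:R : R) + E%:R / h) / ln 2 * M%:R `^ (1 + h).
Proof.
move=> h_gt0 D_gt0 M_gt0.
have ln2_gt0 : (0 : R) < ln 2 by apply: ln_gt0; lra.
have M_gt0' : (0 : R) < M%:R by rewrite ltr0n.
have lnD_ge0 : 0 <= ln (D%:R : R) by rewrite ln_ge0 // ler1n.
have Mh_ge1 : 1 <= (M%:R : R) `^ h.
  have M_ge1 : (1 : R) <= M%:R by rewrite ler1n.
  by have := ler_powR M_ge1 (ltW h_gt0); rewrite powRr0.
have lnM_le := ln_le_powR h_gt0 M_gt0'.
have -> : (M%:R : R) `^ (1 + h) = M%:R * M%:R `^ h.
  by rewrite powRD ?powRr1 ?ler0n // (gt_eqF M_gt0') implybT.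
rewrite /log2 mulrAC ler_pM2r ?invr_gt0 //.
rewrite natrX natrM natrX lnXn ?mulr_gt0 ?exprn_gt0 ?ltr0n //.
rewrite lnM ?posrE ?exprn_gt0 ?ltr0n // lnXn //.
set LD := ln (D%:R : R) in lnD_ge0 *; set L := ln (M%:R : R) in lnM_le *.
set Y := (M%:R : R) `^ h in Mh_ge1 lnM_le *.
rewrite -[leLHS]mulr_natr -[L *+ E]mulr_natr mulrC [leRHS]mulrCA ler_pM2l //.
have ElnM_le : L * E%:R <= E%:R / h * Y.
  by rewrite (mulrC L) mulrAC -mulrA; apply: ler_wpM2l; rewrite ?ler0n.
have lnD_le : LD <= LD * Y by rewrite ler_peMr.
by rewrite mulrDl lerD.
Qed.

Lemma covering_le_radius (R : realType) (V : normedModType R) (eps eps' : R)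
    (X : {fset V}) (A : set V) :
  eps <= eps' -> covering eps X A -> covering eps' X A.
Proof.
move=> eps_le [X_sub X_cover]; split=> // a /X_cover[x xX ax_le].
by exists x; rewrite ?(le_trans ax_le).
Qed.

Lemma codebook_radius_le (R : realType) (c g : R) (e M : nat) :
  0 < c -> (0 < M)%N -> g <= e%:R ->
  M%:R * (c / (M ^ e.+1)%:R) <= c * M%:R `^ (- g).
Proof.
move=> c_gt0 M_gt0 g_le.
have M_neq0 : (M%:R : R) != 0 by rewrite pnatr_eq0 -lt0n.
have -> : M%:R * (c / (M ^ e.+1)%:R) = c * (M%:R ^+ e)^-1.
  by rewrite natrX exprS; field; rewrite M_neq0 expf_neq0.
rewrite ler_pM2l // -powR_mulrn ?ler0n // -powRN.
by apply: ler_powR; rewrite ?ler1n // lerN2.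
Qed.

Lemma Sigma_tilde_infty_encodable (R : realType) (V : normedModType R)
    (phit : {fset nat} -> nat -> V) (pi : nat -> nat) (c : R) :
  poly_growth pi -> (forall I i, i \in I -> `|phit I i| <= 1) -> 0 < c ->
  infty_encodable (Sigma_tilde phit pi c).
Proof.
move=> [k [Cp pi_le]] phit_le1 c_gt0 g g_gt0 h h_gt0.
pose e := (Num.trunc g).+1; pose D := (3 * Cp.+1 * 2 ^ (k + e.+1))%N.
have D_gt0 : (0 < D)%N by rewrite !muln_gt0 expn_gt0.
have ln2_gt0 : (0 : R) < ln 2 by apply: ln_gt0; lra.
exists (fun M => codebook phit c (pi M) (M ^ e.+1) M), c,
  ((ln (D%:R : R) + (k + e.+1)%:R / h) / ln 2).
split=> // [|M M_gt0].
  rewrite divr_gt0 // ltr_pwDr ?divr_gt0 ?ltr0n ?addnS //.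
  by rewrite ln_ge0 // ler1n.
have N_gt0 : (0 < M ^ e.+1)%N by rewrite expn_gt0 M_gt0.
split.
  apply: covering_le_radius (codebook_covering pi c_gt0 N_gt0 M phit_le1).
  by apply: codebook_radius_le => //; rewrite ltW // truncnS_gt.
apply: le_trans (log2_code_count_le _ h_gt0 D_gt0 M_gt0).
apply/ler_log2_nat/(leq_trans (card_codebook _ _ _ _ _)).
by rewrite leq_exp2r // code_count_le.
Qed.

Theorem mainTheorem15 (R : realType) (V : completeNormedModType R)
  (ip : V -> V -> R) (phi : nat -> V) (pi : nat -> nat)
  (phit : {fset nat} -> nat -> V) :
  hilbert_space ip ->
  poly_growth pi ->
  orthonormalization ip phi phit ->
  (forall c : R, 0 < c -> infty_encodable (Sigma_tilde phit pi c)) /\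
  (forall C : set V, bounded_subset C -> C !=set0 ->
     (exists2 c0 : R, 0 < c0 &
        approx_speed C (Sigma phi pi) = approx_speed C (Sigma_tilde phit pi c0)) /\
     (forall c : R, 0 < c ->
        (approx_speed C (Sigma_tilde phit pi c) <= approx_speed C (Sigma phi pi))%E)).
Proof.
move=> ipP pi_poly orthP; split=> [c c_gt0 | C [r C_le] [f0 Cf0]].
  exact: Sigma_tilde_infty_encodable pi_poly (orthonormalization_norm_le1 orthP) c_gt0.
have r_ge0 : 0 <= r := le_trans (normr_ge0 f0) (C_le f0 Cf0).
split=> [|c _]; last by apply: approx_speed_subset => M; apply: Sigma_tilde_sub.
by exists (2 * r + 1); [lra | exact: approx_speed_Sigma_tilde_eq ipP orthP C_le].
Qed.
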